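(* Let $\varphi:\mathbb N\to(0,\infty)$ be nonincreasing with $\lim_{n\to\infty}\varphi(n)=0$ and $\lim_{n\to\infty}n\varphi(n)=\infty$. Then there exists a nondecreasing function $\xi:\mathbb N\to\mathbb N$ with $\lim_{n\to\infty}\xi(n)=\infty$ such that for all sufficiently large $n$, $\varphi(1)\le\xi(n)\,\varphi(n\xi(n))\le2\varphi(1)$. *)

From Stdlib Require Import Reals Lra Lia.
Open Scope R_scope.

(* Take for xi(n) the least k >= 1 with phi(1) <= k phi(nk); it exists because
   nk phi(nk) -> oo as k -> oo.  Since phi is nonincreasing, a k admissible for n
   is admissible for every smaller m, so xi is nondecreasing; and since
   phi(nk) -> 0, a bounded k cannot stay admissible, so xi -> oo.  Minimality
   gives the upper bound: if k = xi(n) - 1 >= 1 then (k+1) phi(n(k+1)) is at most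
   k phi(nk) + phi(n(k+1)) < phi(1) + phi(1). *)
From Stdlib Require Import Reals Lra Lia Wf_nat Classical ClassicalEpsilon.
Open Scope R_scope.

Section LeastAdmissibleFactor.

Variable phi : nat -> R.
Hypothesis phi_pos : forall n : nat, (1 <= n)%nat -> 0 < phi n.
Hypothesis phi_nonincr :
  forall m n : nat, (1 <= m)%nat -> (m <= n)%nat -> phi n <= phi m.

Definition admissible (n k : nat) : Prop :=
  (1 <= k)%nat /\ phi 1%nat <= INR k * phi (n * k)%nat.

Definition least_admissible (n k : nat) : Prop :=
  admissible n k /\ forall j, admissible n j -> (k <= j)%nat.

(* [xi 0] is irrelevant for the statement; it is set to [0] so that [xi] stays
   nondecreasing whatever [phi 0] is. *)
Definition xi (n : nat) : nat :=
  match n with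
  | O => O
  | S _ => epsilon (inhabits O) (least_admissible n)
  end.

Lemma admissible_exists :
  cv_infty (fun n => INR n * phi n) ->
  forall n, (1 <= n)%nat -> exists k, admissible n k.
Proof.
  intros Hinf n Hn.
  destruct (Hinf (INR n * phi 1%nat)) as [N HN].
  exists (S N); split; [lia |].
  assert (HNn : (N <= n * S N)%nat) by nia.
  specialize (HN _ HNn); cbv beta in HN; rewrite mult_INR, Rmult_assoc in HN.
  assert (0 < INR n) by (apply lt_0_INR; lia).
  apply Rlt_le, (Rmult_lt_reg_l (INR n)); assumption.
Qed.

Lemma admissible_le (m n k : nat) :
  (1 <= m)%nat -> (m <= n)%nat -> admissible n k -> admissible m k.
Proof.
  intros Hm Hmn [Hk Hc]; split; [exact Hk |].
  eapply Rle_trans; [exact Hc |].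
  apply Rmult_le_compat_l; [apply pos_INR | apply phi_nonincr; nia].
Qed.

Lemma admissible_ge (M : nat) :
  Un_cv phi 0 -> exists N, forall n k, (N <= n)%nat -> admissible n k -> (M <= k)%nat.
Proof.
  intros H0.
  destruct M as [|M]; [exists O; intros; lia |].
  assert (HM : 0 < INR (S M)) by (apply lt_0_INR; lia).
  assert (Hc : 0 < phi 1%nat) by (apply phi_pos; lia).
  destruct (H0 (phi 1%nat / INR (S M))) as [N HN]; [apply Rdiv_lt_0_compat; assumption |].
  exists (S N); intros n k Hn [Hk Hadm].
  apply Nat.nlt_ge; intros HkM.
  specialize (HN (n * k)%nat ltac:(nia)).
  unfold R_dist in HN; rewrite Rminus_0_r in HN.
  assert (Hp : 0 < phi (n * k)%nat) by (apply phi_pos; nia).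
  rewrite Rabs_right in HN by lra.
  assert (INR k <= INR (S M)) by (apply le_INR; lia).
  assert (INR k * phi (n * k)%nat <= INR (S M) * phi (n * k)%nat)
    by (apply Rmult_le_compat_r; lra).
  assert (INR (S M) * phi (n * k)%nat < INR (S M) * (phi 1%nat / INR (S M)))
    by (apply Rmult_lt_compat_l; assumption).
  assert (INR (S M) * (phi 1%nat / INR (S M)) = phi 1%nat) by (field; lra).
  lra.
Qed.

Lemma not_admissible_succ_le (n k : nat) :
  (1 <= n)%nat -> ~ admissible n k ->
  INR (S k) * phi (n * S k)%nat <= 2 * phi 1%nat.
Proof.
  intros Hn Hk.
  assert (Hlt : INR k * phi (n * S k)%nat < phi 1%nat).
  { destruct k as [|k].
    - rewrite Rmult_0_l; apply phi_pos; lia.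
    - apply Rle_lt_trans with (INR (S k) * phi (n * S k)%nat).
      + apply Rmult_le_compat_l; [apply pos_INR | apply phi_nonincr; nia].
      + apply Rnot_le_lt; intro Hc; apply Hk; split; [lia | exact Hc]. }
  assert (phi (n * S (S k))%nat <= phi (n * S k)%nat) by (apply phi_nonincr; nia).
  assert (phi (n * S k)%nat <= phi 1%nat) by (apply phi_nonincr; nia).
  rewrite S_INR, Rmult_plus_distr_r, Rmult_1_l.
  lra.
Qed.

Hypothesis phi_n_phi_n_infty : cv_infty (fun n => INR n * phi n).

Lemma xi_spec (n : nat) : (1 <= n)%nat -> least_admissible n (xi n).
Proof.
  intros Hn; destruct n as [|n]; [lia |]; simpl.
  apply epsilon_spec.
  destruct (dec_inh_nat_subset_has_unique_least_element (admissible (S n)))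
    as [k [Hk _]].
  - intros k; apply classic.
  - apply admissible_exists; assumption.
  - exists k; exact Hk.
Qed.

Lemma xi_nondecr (m n : nat) : (m <= n)%nat -> (xi m <= xi n)%nat.
Proof.
  intros Hmn; destruct m as [|m]; [simpl; lia |].
  apply (proj2 (xi_spec (S m) ltac:(lia))).
  apply (admissible_le (S m) n); [lia | exact Hmn |].
  apply (proj1 (xi_spec n ltac:(lia))).
Qed.

Hypothesis phi_to_0 : Un_cv phi 0.

Lemma xi_unbounded (M : nat) : exists N, forall n, (N <= n)%nat -> (M <= xi n)%nat.
Proof.
  destruct (admissible_ge M phi_to_0) as [N HN].
  exists (S N); intros n Hn.
  apply (HN n); [lia |].
  apply (proj1 (xi_spec n ltac:(lia))).
Qed.

Lemma xi_bounds (n : nat) : (1 <= n)%nat ->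
  phi 1%nat <= INR (xi n) * phi (n * xi n)%nat <= 2 * phi 1%nat.
Proof.
  intros Hn.
  destruct (xi_spec n Hn) as [[Hxi_pos Hlow] Hmin].
  split; [exact Hlow |].
  destruct (xi n) as [|k]; [lia |].
  apply not_admissible_succ_le; [exact Hn |].
  intros Hk; specialize (Hmin k Hk); lia.
Qed.

End LeastAdmissibleFactor.

Theorem lemma4p2 (phi : nat -> R)
  (Hpos : forall n : nat, (1 <= n)%nat -> 0 < phi n)
  (Hmono : forall m n : nat, (1 <= m)%nat -> (m <= n)%nat -> phi n <= phi m)
  (Hlim0 : Un_cv phi 0)
  (Hlim_inf : cv_infty (fun n => INR n * phi n)) :
  exists xi : nat -> nat,
    (forall m n : nat, (m <= n)%nat -> (xi m <= xi n)%nat) /\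
    (forall M : nat, exists N : nat, forall n : nat, (N <= n)%nat -> (M <= xi n)%nat) /\
    (exists N : nat, forall n : nat, (N <= n)%nat ->
       phi 1%nat <= INR (xi n) * phi (n * xi n)%nat <= 2 * phi 1%nat).
Proof.
  exists (xi phi); split; [| split].
  - exact (xi_nondecr phi Hmono Hlim_inf).
  - exact (xi_unbounded phi Hpos Hlim_inf Hlim0).
  - exists 1%nat; exact (xi_bounds phi Hpos Hmono Hlim_inf).
Qed.
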